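(* Let $L\subseteq\mathbb{R}^m$ be a lattice that gives the unique (up to isometry) densest periodic packing of spheres of some fixed radius in $\mathbb{R}^m$. Then (a) every lattice code in $\mathbb{R}^m/L$ is optimal, and (b) if there exists a lattice code of size $n$ in $\mathbb{R}^m/L$, then every optimal code of size $n$ in $\mathbb{R}^m/L$ is a lattice code up to isometry (i.e., is the image of a lattice code under an isometry of $\mathbb{R}^m/L$).
   Context: A lattice is a discrete full-rank subgroup of $\mathbb{R}^m$; $\ell(L)$ is the smallest Euclidean norm of a nonzero vector of $L$. The torus $\mathbb{R}^m/L$ carries the metric $d(x,y):=\min\{\|s-t\|_2:s\in x,t\in y\}$. For finite $C\subseteq\mathbb{R}^m/L$, $\delta(C)$ is the minimum distance between distinct points of $C$; an optimal code of size $n$ is an $n$-element subset maximizing $\delta$. $\operatorname{CO}(m):=\{cQ:c>0,Q\in\operatorname{O}(m)\}$. A lattice code in $\mathbb{R}^m/L$ is a set $(TL)/L$ where $T\in\operatorname{CO}(m)$ is such that $L\subseteq TL$. A periodic packing of spheres of radius $r$ is a set $P=\bigcup_{s\in S}(s+\Lambda)$ for a lattice $\Lambda$ and finite $S$, with all distinct points of $P$ at distance at least $2r$; its density is the proportion of space covered by balls of radius $r$ around points of $P$. The hypothesis means: the packing of balls of radius $\ell(L)/2$ centered at points of $L$ has maximum density among all periodic sphere packings in $\mathbb{R}^m$ with that radius, and every periodic packing of such spheres attaining this density is the image of $L$ under an isometry of $\mathbb{R}^m$. *)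

From HB Require Import structures.
From mathcomp Require Import all_boot all_order all_algebra.
From mathcomp Require Import all_classical all_reals.
Set Implicit Arguments. Unset Strict Implicit. Unset Printing Implicit Defensive.
Import Order.TTheory GRing.Theory Num.Theory.
Local Open Scope classical_set_scope.
Local Open Scope ring_scope.

Section Defs.
Variables (R : realType) (m : nat).
Notation vec := 'rV[R]_m.

Definition enorm (v : vec) : R := Num.sqrt (\sum_(i < m) v ord0 i ^+ 2).

Definition is_lattice (L : set vec) : Prop :=
  [/\ L 0, (forall x y, L x -> L y -> L (x - y)),
      (forall x, L x -> exists2 e : R, 0 < e &
          forall y, L y -> y <> x -> e <= enorm (y - x)) &
      (exists B : 'M[R]_m, (forall i, L (row i B)) /\ B \in unitmx)].

Definition minnorm (L : set vec) : R := inf [set enorm v | v in L `\ 0].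

(* the coset x + L, i.e. a point of the torus R^m/L *)
Definition coset (L : set vec) (x : vec) : set vec := [set x + l | l in L].

Definition torus_pt (L : set vec) (X : set vec) : Prop := exists x, X = coset L x.

(* d(X, Y) = min {||s - t|| : s in X, t in Y} (the min exists, so it is the inf) *)
Definition tdist (X Y : set vec) : R := inf [set enorm (s - t) | s in X & t in Y].

Definition torus_code (L : set vec) (C : set (set vec)) (n : nat) : Prop :=
  (forall X, C X -> torus_pt L X) /\
  exists f : 'I_n -> set vec, injective f /\ range f = C.

Definition min_dist (C : set (set vec)) : R :=
  inf [set r | exists X Y, [/\ C X, C Y, X <> Y & r = tdist X Y]].

Definition optimal_code (L : set vec) (C : set (set vec)) (n : nat) : Prop :=
  torus_code L C n /\ forall C', torus_code L C' n -> min_dist C' <= min_dist C.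

Definition is_CO (T : 'M[R]_m) : Prop :=
  exists c : R, exists Q : 'M[R]_m, [/\ 0 < c, Q *m Q^T = 1%:M & T = c *: Q].

(* image TL of L under T (acting on row vectors: x |-> x T) *)
Definition mx_image (T : 'M[R]_m) (L : set vec) : set vec := [set x *m T | x in L].

Definition lattice_code (L : set vec) (C : set (set vec)) : Prop :=
  exists T : 'M[R]_m, [/\ is_CO T, L `<=` mx_image T L &
     C = [set coset L t | t in mx_image T L]].

Definition torus_isometry (L : set vec) (phi : set vec -> set vec) : Prop :=
  [/\ (forall X, torus_pt L X -> torus_pt L (phi X)),
      (forall X Y, torus_pt L X -> torus_pt L Y -> tdist (phi X) (phi Y) = tdist X Y) &
      (forall Y, torus_pt L Y -> exists2 X, torus_pt L X & phi X = Y)].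

Definition isometry (f : vec -> vec) : Prop :=
  forall x y, enorm (f x - f y) = enorm (x - y).

Definition zbasis (Lam : set vec) (B : 'M[R]_m) : Prop :=
  Lam = [set \sum_(i < m) (z i)%:~R *: row i B | z in [set: 'I_m -> int]].

(* P is a periodic packing of spheres of radius r, P = U_{s in S} (s + Lam),
   with S = {s_1..s_k} pairwise inequivalent mod Lam, and d is its density
   divided by vol(B_r), i.e. d = k / covol(Lam). *)
Definition periodic_packing (r : R) (P : set vec) (d : R) : Prop :=
  exists (Lam : set vec) (B : 'M[R]_m) (k : nat) (s : 'I_k -> vec),
  [/\ is_lattice Lam /\ zbasis Lam B,
      (forall i j, i != j -> ~ Lam (s i - s j)),
      P = \bigcup_(i in [set: 'I_k]) coset Lam (s i),
      (forall x y, P x -> P y -> x <> y -> 2 * r <= enorm (x - y)) &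
      d = k%:R / `|\det B|].

Definition unique_densest (L : set vec) : Prop :=
  exists dL : R,
  [/\ periodic_packing (minnorm L / 2) L dL,
      (forall P d, periodic_packing (minnorm L / 2) P d -> d <= dL) &
      (forall P, periodic_packing (minnorm L / 2) P dL ->
         exists2 f : vec -> vec, isometry f & P = f @` L)].

End Defs.

(* Let l = l(L) and let C be a code of size n >= 2 in R^m/L with minimum
   distance delta.  Scaling the union of the cosets in C by mu = l / delta gives
   a periodic packing of balls of radius l/2 whose density is n / mu^m times
   that of L, so maximality of L forces n delta^m <= l^m.  A lattice code
   (cQL)/L has minimum distance at least c l and size n >= c^-m (a counting
   argument), so n delta^m >= l^m and no code of that size does better: this
   is (a).  An optimal code C of the size of some lattice code then attains
   n delta^m = l^m, so the scaled packing is a densest one; by uniqueness it is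
   an isometric, hence affine, image x |-> x Q + b of L, and undoing the
   scaling shows that C is the translate by b / mu of the lattice code
   (mu^-1 Q L)/L. *)

From Pilot Require Import Defs.
From HB Require Import structures.
From mathcomp Require Import all_boot all_order all_algebra.
From mathcomp Require Import all_classical all_reals.
From mathcomp Require Import topology normedtype sequences.
From mathcomp Require Import ring lra zify.
Import Order.TTheory GRing.Theory Num.Theory.
Local Open Scope classical_set_scope.
Local Open Scope ring_scope.
Set Implicit Arguments. Unset Strict Implicit. Unset Printing Implicit Defensive.

Section Euclid.
Variables (R : realType) (m : nat).
Notation vec := 'rV[R]_m.

Definition dot (u v : vec) : R := \sum_(i < m) u ord0 i * v ord0 i.

Lemma dotE (u v : vec) : dot u v = (u *m v^T) 0 0.
Proof. by rewrite !mxE; apply: eq_bigr => i _; rewrite mxE. Qed.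

Lemma dotC (u v : vec) : dot u v = dot v u.
Proof. by apply: eq_bigr => i _; rewrite mulrC. Qed.

Lemma dotDl (u v w : vec) : dot (u + v) w = dot u w + dot v w.
Proof. by rewrite !dotE mulmxDl mxE. Qed.

Lemma dotNl (u w : vec) : dot (- u) w = - dot u w.
Proof. by rewrite !dotE mulNmx mxE. Qed.

Lemma dotZl a (u w : vec) : dot (a *: u) w = a * dot u w.
Proof. by rewrite !dotE -scalemxAl mxE. Qed.

Lemma dotBl (u v w : vec) : dot (u - v) w = dot u w - dot v w.
Proof. by rewrite dotDl dotNl. Qed.

Lemma dotBr (u v w : vec) : dot w (u - v) = dot w u - dot w v.
Proof. by rewrite dotC dotBl !(dotC w). Qed.

Lemma dotZr a (u w : vec) : dot w (a *: u) = a * dot w u.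
Proof. by rewrite dotC dotZl dotC. Qed.

Lemma dot_ge0 (v : vec) : 0 <= dot v v.
Proof. by apply: sumr_ge0 => i _; rewrite -expr2 sqr_ge0. Qed.

Lemma dot_delta (v : vec) j : dot v (delta_mx 0 j) = v 0 j.
Proof.
rewrite /dot (bigD1 j) //= big1 ?addr0 => [|k kj]; first by rewrite mxE eqxx mulr1.
by rewrite mxE (negbTE kj) mulr0.
Qed.

Lemma enormE (v : vec) : enorm v = Num.sqrt (dot v v).
Proof. by congr Num.sqrt; apply: eq_bigr => i _; rewrite expr2. Qed.

Lemma enorm_ge0 (v : vec) : 0 <= enorm v.
Proof. exact: sqrtr_ge0. Qed.

Lemma enorm_sq (v : vec) : enorm v ^+ 2 = dot v v.
Proof. by rewrite enormE sqr_sqrtr // dot_ge0. Qed.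

Lemma enorm_eq0 (v : vec) : enorm v = 0 -> v = 0.
Proof.
move=> v0; have vv0 : dot v v = 0 by rewrite -enorm_sq v0 expr0n.
apply/rowP => i; rewrite mxE; apply/eqP; rewrite -[_ == 0]orbb -mulf_eq0.
by apply/eqP/(psumr_eq0P _ vv0) => // j _; rewrite -expr2 sqr_ge0.
Qed.

Lemma enormZ a (v : vec) : enorm (a *: v) = `|a| * enorm v.
Proof. by rewrite !enormE dotZl dotZr mulrA -expr2 sqrtrM ?sqr_ge0 // sqrtr_sqr. Qed.

Lemma enorm0 : enorm (0 : vec) = 0.
Proof. by rewrite -(scale0r (0 : vec)) enormZ normr0 mul0r. Qed.

Lemma enorm_sqB (u v : vec) : enorm (u - v) ^+ 2 = dot u u - 2 * dot u v + dot v v.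
Proof. by rewrite enorm_sq dotBl !dotBr (dotC v u); ring. Qed.

Lemma enorm_le_sum (v : vec) : enorm v <= \sum_i `|v 0 i|.
Proof.
have sum_ge0 : 0 <= \sum_i `|v 0 i| by rewrite sumr_ge0.
rewrite -[X in _ <= X]ger0_norm // -sqrtr_sqr; apply: ler_wsqrtr.
rewrite expr2 mulr_suml; apply: ler_sum => i _.
rewrite -real_normK ?num_real // expr2 ler_wpM2l //.
by rewrite (bigD1 i) //= lerDl sumr_ge0.
Qed.

Lemma enorm_mulmx_le (w : vec) (B : 'M[R]_m) M : (forall r, `|w 0 r| <= M) ->
  enorm (w *m B) <= M * \sum_i \sum_r `|B r i|.
Proof.
move=> w_le; apply: le_trans (enorm_le_sum _) _; rewrite mulr_sumr.
apply: ler_sum => i _; rewrite mxE mulr_sumr; apply: le_trans (ler_norm_sum _ _ _) _.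
apply: ler_sum => r _; rewrite normrM ler_wpM2r //.
Qed.

Lemma enorm_orth_scale c (Q : 'M[R]_m) (v : vec) : Q *m Q^T = 1%:M ->
  enorm (v *m (c *: Q)) = `|c| * enorm v.
Proof.
move=> QQ; rewrite -scalemxAr enormZ !enormE !dotE trmx_mul mulmxA.
by rewrite -(mulmxA v) QQ mulmx1.
Qed.

Lemma isometry_affine (f : vec -> vec) : Defs.isometry f ->
  exists Q : 'M[R]_m, exists b : vec, Q *m Q^T = 1%:M /\ forall x, f x = x *m Q + b.
Proof.
move=> f_iso; pose b := f 0; pose g x := f x - b.
have gB x y : enorm (g x - g y) = enorm (x - y) by rewrite /g opprB addrA subrK f_iso.
have gN x : enorm (g x) = enorm x by have := gB x 0; rewrite /g /b subrr !subr0.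
have g_dot x y : dot (g x) (g y) = dot x y.
  have := congr1 (fun r => r ^+ 2) (gB x y); rewrite /= !enorm_sqB -!enorm_sq !gN.
  lra.
pose Q := \matrix_(i, k) g (delta_mx 0 i) 0 k.
have dotQ x i : (g x *m Q^T) 0 i = dot (g x) (g (delta_mx 0 i)).
  by rewrite mxE; apply: eq_bigr => k _; rewrite !mxE.
have QQ : Q *m Q^T = 1%:M.
  apply/row_matrixP => i; rewrite row_mul; have -> : row i Q = g (delta_mx 0 i).
    by apply/rowP => k; rewrite !mxE.
  by apply/rowP => j; rewrite dotQ g_dot dot_delta row1 !mxE eqxx eq_sym.
exists Q, b; split => // x.
have gQ : g x *m Q^T = x by apply/rowP => j; rewrite dotQ g_dot dot_delta.
by rewrite -[x in RHS]gQ -mulmxA (mulmx1C QQ) mulmx1 subrK.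
Qed.

Lemma scaled_image_affine mu (U L : set vec) (Q : 'M[R]_m) b : mu != 0 ->
  [set mu *: u | u in U] = [set y *m Q + b | y in L] ->
  U = [set y *m (mu^-1 *: Q) + mu^-1 *: b | y in L].
Proof.
move=> mu_neq0 eUL; apply/seteqP; split=> [u Uu | _ [y Ly <-]].
  have [y Ly e] : [set y *m Q + b | y in L] (mu *: u) by rewrite -eUL; exists u.
  by exists y => //; rewrite -scalemxAr -scalerDr e scalerA mulVf // scale1r.
have : [set y *m Q + b | y in L] (y *m Q + b) by exists y.
rewrite -eUL => -[u Uu e].
by rewrite -scalemxAr -scalerDr -e scalerA mulVf // scale1r.
Qed.

End Euclid.

Lemma geometric_lt (R : realType) (K rho l : R) : `|rho| < 1 -> 0 < l ->
  exists p : nat, K * rho ^+ p < l.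
Proof.
move=> rho_lt1 l_gt0.
have [N _ geoN] := cvgr0_norm_lt (fun p => geometric K rho p : R^o)
  (cvg_geometric K rho_lt1) _ l_gt0.
by exists N; apply: le_lt_trans (ler_norm _) (geoN N (leqnn N)).
Qed.

Lemma exprM_natS_le (R : realType) (c : R) (n p k : nat) : 0 <= c -> (0 < n)%N ->
  c ^+ (p * k) * (n ^ p).+1%:R <= 2 * (n%:R * c ^+ k) ^+ p.
Proof.
move=> c_ge0 n_gt0; set rho := n%:R * c ^+ k.
have -> : c ^+ (p * k) * (n ^ p).+1%:R = rho ^+ p + (c ^+ k) ^+ p.
  by rewrite /rho exprMn mulnC exprM -natr1 natrX; ring.
suff : (c ^+ k) ^+ p <= rho ^+ p by lra.
rewrite lerXn2r // ?nnegrE ?mulr_ge0 ?exprn_ge0 //.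
by rewrite /rho ler_peMl ?exprn_ge0 // ler1n.
Qed.

Section Distances.
Variables (R : realType) (m : nat).
Notation vec := 'rV[R]_m.

Lemma inf_ge0 (E : set R) : (forall y, E y -> 0 <= y) -> 0 <= inf E.
Proof.
move=> E_ge0; have [[x Ex]|/set0P/negP/negPn/eqP ->] := pselect (E !=set0).
  by apply: lb_le_inf; [exists x | exact: E_ge0].
by rewrite inf0.
Qed.

Lemma tdist_ge0 (X Y : set vec) : 0 <= tdist X Y.
Proof. by apply: inf_ge0 => _ [s _ [t _ <-]]; exact: enorm_ge0. Qed.

Lemma tdist_le (X Y : set vec) s t : X s -> Y t -> tdist X Y <= enorm (s - t).
Proof.
move=> Xs Yt; apply: ge_inf; last by exists s => //; exists t.
by exists 0 => _ [a _ [b _ <-]]; exact: enorm_ge0.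
Qed.

Lemma min_dist_ge0 (C : set (set vec)) : 0 <= min_dist C.
Proof. by apply: inf_ge0 => _ [X [Y [_ _ _ ->]]]; exact: tdist_ge0. Qed.

Lemma min_dist_le (C : set (set vec)) X Y : C X -> C Y -> X <> Y ->
  min_dist C <= tdist X Y.
Proof.
move=> CX CY XY; apply: ge_inf; last by exists X, Y.
by exists 0 => _ [X' [Y' [_ _ _ ->]]]; exact: tdist_ge0.
Qed.

Lemma min_dist_ge (C : set (set vec)) a :
  (exists X Y, [/\ C X, C Y & X <> Y]) -> (forall X, C X -> X !=set0) ->
  (forall X Y s t, C X -> C Y -> X <> Y -> X s -> Y t -> a <= enorm (s - t)) ->
  a <= min_dist C.
Proof.
move=> [X0 [Y0 [CX0 CY0 XY0]]] C_neq0 a_le.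
apply: lb_le_inf; first by exists (tdist X0 Y0), X0, Y0.
move=> _ [X [Y [CX CY XY ->]]]; have [s Xs] := C_neq0 X CX.
have [t Yt] := C_neq0 Y CY.
apply: lb_le_inf; first by exists (enorm (s - t)), s => //; exists t.
by move=> _ [s' Xs' [t' Yt' <-]]; exact: a_le XY Xs' Yt'.
Qed.

End Distances.

Section Lattice.
Variables (R : realType) (m : nat).
Notation vec := 'rV[R]_m.
Variable L : set vec.
Hypothesis hL : is_lattice L.

Lemma lattice0 : L 0.
Proof. by case: hL. Qed.

Lemma latticeB x y : L x -> L y -> L (x - y).
Proof. by case: hL => _ + _ _; apply. Qed.

Lemma latticeN x : L x -> L (- x).
Proof. by move=> Lx; rewrite -sub0r; apply: latticeB => //; exact: lattice0. Qed.

Lemma latticeD x y : L x -> L y -> L (x + y).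
Proof. by move=> Lx Ly; rewrite -[y]opprK; apply: latticeB => //; exact: latticeN. Qed.

Lemma latticeMn x k : L x -> L (x *+ k).
Proof.
move=> Lx; elim: k => [|k IHk]; first by rewrite mulr0n; exact: lattice0.
by rewrite mulrS; exact: latticeD.
Qed.

Lemma lattice_sum (I : finType) (F : I -> vec) : (forall i, L (F i)) -> L (\sum_i F i).
Proof. by move=> LF; apply: big_ind => //; [exact: lattice0 | exact: latticeD]. Qed.

Lemma minnorm_ge0 : 0 <= minnorm L.
Proof. by apply: inf_ge0 => _ [v _ <-]; exact: enorm_ge0. Qed.

Lemma minnorm_le v : L v -> v != 0 -> minnorm L <= enorm v.
Proof.
move=> Lv v_neq0; apply: ge_inf; last by exists v => //; split => //; exact/eqP.
by exists 0 => _ [w _ <-]; exact: enorm_ge0.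
Qed.

Lemma minnorm_gt0 : (0 < m)%N -> 0 < minnorm L.
Proof.
move=> m_gt0; case: hL => _ _ discrete [B [LB B_unit]].
have [e e_gt0 e_le] := discrete 0 lattice0.
apply: lt_le_trans e_gt0 _; apply: lb_le_inf.
  set i0 := Ordinal m_gt0; exists (enorm (row i0 B)), (row i0 B) => //.
  split=> // B0; have := row_mul i0 B (invmx B); rewrite B0 mul0mx mulmxV //.
  by move/rowP/(_ i0); rewrite !mxE eqxx => /eqP; rewrite pnatr_eq0.
by move=> _ [v [Lv v_neq0] <-]; rewrite -[v]subr0; exact: e_le.
Qed.

Lemma coset_self a : coset L a a.
Proof. by exists 0; [exact: lattice0 | rewrite addr0]. Qed.

Lemma coset_eqP a b : coset L a = coset L b <-> L (a - b).
Proof.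
split=> [eab | Lab].
  have : coset L b a by rewrite -eab; exact: coset_self.
  by case=> l Ll <-; rewrite addrC addKr.
apply/seteqP; split=> _ [l Ll <-].
  by exists (a - b + l); [exact: latticeD | rewrite addrCA addrA subrK].
exists (l - (a - b)); first exact: latticeB.
by rewrite opprB addrCA [a + _]addrC subrK addrC.
Qed.

Lemma coset_sub_eq a y : coset L a y -> coset L y = coset L a.
Proof. by case=> l Ll <-; apply/coset_eqP; rewrite addrC addKr. Qed.

Definition transl (b : vec) (X : set vec) : set vec := [set z + b | z in X].

Lemma transl_coset a b : transl b (coset L a) = coset L (a + b).
Proof.
apply/seteqP; split; first by move=> _ [_ [l Ll <-] <-]; exists l => //; rewrite addrAC.
by move=> _ [l Ll <-]; exists (a + l); [exists l | rewrite addrAC].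
Qed.

Lemma transl_isometry b : torus_isometry L (transl b).
Proof.
have transl_dist s t : (s + b) - (t + b) = s - t by rewrite opprD addrACA subrr addr0.
split.
- by move=> _ [x ->]; exists (x + b); rewrite transl_coset.
- move=> X Y _ _; congr inf; apply/seteqP; split.
    by move=> _ [_ [s Xs <-] [_ [t Yt <-] <-]]; exists s => //; exists t; rewrite ?transl_dist.
  move=> _ [s Xs [t Yt <-]]; exists (s + b); first by exists s.
  by exists (t + b); [exists t | rewrite transl_dist].
- move=> _ [y ->]; exists (coset L (y - b)); first by exists (y - b).
  by rewrite transl_coset subrK.
Qed.

Lemma transl_cosets n (x : 'I_n -> vec) b :
  transl b @` [set coset L (x i) | i in [set: 'I_n]] =
  [set coset L (x i + b) | i in [set: 'I_n]].
Proof. by rewrite image_comp; apply: eq_imagel => i _; exact: transl_coset. Qed.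

Definition inequivalent n (x : 'I_n -> vec) := forall i j, i != j -> ~ L (x i - x j).

Lemma torus_codeP C n : torus_code L C n ->
  exists2 x : 'I_n -> vec, inequivalent x & C = [set coset L (x i) | i in [set: 'I_n]].
Proof.
case=> C_pt [f [f_inj f_C]].
have [x fx] : {x : 'I_n -> vec & forall i, f i = coset L (x i)}.
  by apply: (@choice _ _ (fun i y => f i = coset L y)) => i; apply: C_pt; rewrite -f_C; exists i.
exists x; first by move=> i j /eqP ij /coset_eqP Lx; apply/ij/f_inj; rewrite !fx.
by rewrite -f_C; apply: eq_imagel => i _; rewrite fx.
Qed.

Lemma torus_code_cosets n (x : 'I_n -> vec) : inequivalent x ->
  torus_code L [set coset L (x i) | i in [set: 'I_n]] n.
Proof.
move=> x_ineq; split; first by move=> _ [i _ <-]; exists (x i).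
exists (fun i => coset L (x i)); split => // i j /coset_eqP Lx.
by apply/eqP/negPn/negP => ij; exact: x_ineq ij Lx.
Qed.

Lemma min_dist_cosets_le n (x : 'I_n -> vec) i j : inequivalent x -> i != j ->
  min_dist [set coset L (x i) | i in [set: 'I_n]] <= tdist (coset L (x i)) (coset L (x j)).
Proof.
move=> x_ineq ij; apply: min_dist_le; [by exists i | by exists j |].
by move/coset_eqP; exact: x_ineq.
Qed.

Lemma min_dist_small C n : torus_code L C n -> (n <= 1)%N -> min_dist C = 0.
Proof.
case=> _ [f [_ f_C]] n_le1; rewrite /min_dist (_ : [set r | _] = set0) ?inf0 //.
apply/seteqP; split => // r [X [Y]]; rewrite -f_C => -[[i _ <-] [j _ <-] fij _].
by apply: fij; congr f; apply: ord_inj; move: (ltn_ord i) (ltn_ord j); lia.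
Qed.

Lemma torus_code_two C n : torus_code L C n -> (1 < n)%N ->
  exists X Y, [/\ C X, C Y & X <> Y].
Proof.
move=> C_code n_gt1; have [x x_ineq ->] := torus_codeP C_code.
exists (coset L (x (Ordinal (ltnW n_gt1)))), (coset L (x (Ordinal n_gt1))).
by split; [eexists | eexists | move/coset_eqP; exact: x_ineq].
Qed.

Lemma torus_code_dim_gt0 C n : torus_code L C n -> (1 < n)%N -> (0 < m)%N.
Proof.
move=> C_code n_gt1; have [x x_ineq _] := torus_codeP C_code.
rewrite lt0n; apply/negP => /eqP m0.
apply: (x_ineq (Ordinal (ltnW n_gt1)) (Ordinal n_gt1)) => //.
rewrite [_ - _](_ : _ = 0); first exact: lattice0.
by apply/rowP => i; have := ltn_ord i; rewrite {2}m0.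
Qed.

Lemma torus_code1 C X : torus_code L C 1 -> C X -> C = [set X].
Proof.
case=> _ [f [_ f_C]] CX; rewrite -f_C in CX *; case: CX => i _ <-.
by apply/seteqP; split=> [_ [j _ <-]|_ ->]; [rewrite (ord1 i) (ord1 j) | exists i].
Qed.

End Lattice.

Section SublatticeIndex.
Variables (R : realType) (m : nat).
Notation vec := 'rV[R]_m.
Variable L : set vec.
Hypothesis hL : is_lattice L.

Lemma lattice_box : exists2 K : R, 0 <= K & forall N : nat,
  exists y : {ffun 'I_m -> 'I_N} -> vec,
    [/\ injective y, forall a, L (y a) & forall a a', enorm (y a - y a') <= K * N%:R].
Proof.
case: hL => _ _ _ [B [LB B_unit]].
exists (\sum_i \sum_r `|B r i|); first by do 2!(apply: sumr_ge0 => ? _).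
move=> N; pose y (a : {ffun 'I_m -> 'I_N}) := \row_r ((a r)%:R : R) *m B.
have yB a a' : y a - y a' = \row_r ((a r)%:R - (a' r)%:R : R) *m B.
  by rewrite -mulmxBl; congr (_ *m _); apply/rowP => r; rewrite !mxE.
exists y; split.
- move=> a a' /eqP; rewrite -subr_eq0 yB => /eqP/(congr1 (mulmx^~ (invmx B))).
  rewrite mulmxK // mul0mx => /rowP a_a'; apply/ffunP => r; apply: val_inj.
  by move: (a_a' r); rewrite !mxE => /eqP; rewrite subr_eq0 eqr_nat => /eqP.
- move=> a; rewrite /y mulmx_sum_row; apply: (lattice_sum hL) => r.
  by rewrite mxE scaler_nat; apply: (latticeMn hL).
- move=> a a'; rewrite yB mulrC; apply: enorm_mulmx_le => r.
  rewrite mxE ler_norml; have := ltn_ord (a r); have := ltn_ord (a' r).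
  rewrite -!(ltr_nat R) => ha' ha; have := ler0n R (a r); have := ler0n R (a' r).
  by move=> *; apply/andP; split; lra.
Qed.

Lemma card_le_cover (A I : finType) (z : A -> vec) (u : I -> vec) :
  injective z -> (forall a a', enorm (z a - z a') < minnorm L) ->
  (forall a, exists i, coset L (u i) (z a)) -> (#|A| <= #|I|)%N.
Proof.
move=> z_inj z_close z_cover; have [g gP] := choice z_cover.
apply: (@leq_card _ _ g) => a a' g_aa'; apply: z_inj; apply/eqP; rewrite -subr_eq0.
apply: contraTT (z_close a a') => z_neq; rewrite -leNgt; apply: minnorm_le z_neq.
have [l1 Ll1 <-] := gP a; have [l2 Ll2 <-] := gP a'.
suff -> : u (g a) + l1 - (u (g a') + l2) = l1 - l2 by exact: latticeB.
by rewrite g_aa' opprD addrACA subrr add0r.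
Qed.

Lemma lattice_image_pow_cover (T : 'M[R]_m) n (t : 'I_n -> vec) :
  (forall y, L y -> exists a, coset L (t a) (y *m T)) ->
  forall j, exists (I : finType) (u : I -> vec),
    (#|I| <= n ^ j)%N /\ forall y, L y -> exists i, coset L (u i) (y *m T ^+ j).
Proof.
move=> T_cover; elim=> [|j [I [u [card_I u_cover]]]].
  exists unit, (fun _ => 0); split=> [|y Ly]; first by rewrite card_unit.
  by exists tt; rewrite expr0 mulmx1 -[y]add0r; exists y.
exists (prod I 'I_n), (fun p => u p.1 *m T + t p.2); split.
  by rewrite card_prod card_ord expnS mulnC leq_mul.
move=> y Ly; have [i [l Ll el]] := u_cover y Ly.
have [a [l' Ll' el']] := T_cover l Ll.
exists (i, a); exists l' => //=.
by rewrite exprSr -mulmxE mulmxA -el mulmxDl -el' addrA.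
Qed.

Lemma lattice_image_index c (Q : 'M[R]_m) n (t : 'I_n -> vec) :
  (0 < m)%N -> 0 < c -> Q *m Q^T = 1%:M ->
  (forall y, L y -> exists a, coset L (t a) (y *m (c *: Q))) ->
  1 <= n%:R * c ^+ m.
Proof.
move=> m_gt0 c_gt0 QQ T_cover; set T := c *: Q.
have enormT j (y : vec) : enorm (y *m T ^+ j) = c ^+ j * enorm y.
  elim: j y => [|j IHj] y; first by rewrite expr0 mulmx1 mul1r.
  by rewrite exprSr -mulmxE mulmxA enorm_orth_scale // IHj gtr0_norm // exprS mulrA.
have [a0 _] := T_cover 0 (lattice0 hL).
have n_gt0 : (0 < n)%N by exact: leq_ltn_trans (leq0n a0) (ltn_ord a0).
(* If n c^m < 1, then for j = p m and N = n^p + 1 the images under T^j of a box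
   of N^m points of L are pairwise closer than l(L), yet they lie in at most
   n^j < N^m cosets of L. *)
rewrite leNgt; apply/negP => rho_lt1.
have rho_ge0 : 0 <= n%:R * c ^+ m by rewrite mulr_ge0 ?ler0n ?exprn_ge0 ?ltW.
have [K K_ge0 box] := lattice_box.
have [p K_rho] : exists p : nat, 2 * K * (n%:R * c ^+ m) ^+ p < minnorm L.
  by apply: geometric_lt; [rewrite ger0_norm | exact: minnorm_gt0].
have [y [y_inj Ly y_close]] := box (n ^ p).+1.
have [I [u [card_I u_cover]]] := lattice_image_pow_cover T_cover (p * m).
suff : ((n ^ p).+1 ^ m <= n ^ (p * m))%N by rewrite expnM leqNgt ltn_exp2r // ltnSn.
apply: leq_trans card_I; rewrite -(card_ord (n ^ p).+1) -[m]card_ord -card_ffun.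
apply: (card_le_cover (z := fun a => y a *m T ^+ (p * m))) => [a a' /eqP| a a' |a].
- rewrite -subr_eq0 -mulmxBl => /eqP/(congr1 (@enorm R m)); rewrite enormT enorm0.
  move/eqP; rewrite mulf_eq0 expf_eq0 (gt_eqF c_gt0) andbF.
  by move=> /eqP/enorm_eq0/subr0_eq/y_inj.
- rewrite -mulmxBl enormT; apply: le_lt_trans K_rho.
  apply: le_trans (ler_wpM2l (exprn_ge0 _ (ltW c_gt0)) (y_close a a')) _.
  rewrite mulrCA (mulrC 2 K) -mulrA ler_wpM2l //.
  exact: exprM_natS_le (ltW c_gt0) n_gt0.
- exact: u_cover.
Qed.

End SublatticeIndex.

Section PeriodicSets.
Variables (R : realType) (m : nat).
Notation vec := 'rV[R]_m.

Definition periodic_set (P : set vec) (d : R) : Prop :=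
  exists (Lam : set vec) (B : 'M[R]_m) (k : nat) (s : 'I_k -> vec),
  [/\ is_lattice Lam /\ zbasis Lam B, (forall i j, i != j -> ~ Lam (s i - s j)),
      P = \bigcup_(i in [set: 'I_k]) coset Lam (s i) & d = k%:R / `|\det B|].

Definition separated (r : R) (P : set vec) : Prop :=
  forall x y, P x -> P y -> x <> y -> 2 * r <= enorm (x - y).

Lemma periodic_packingP r P d :
  periodic_packing r P d <-> periodic_set P d /\ separated r P.
Proof.
split=> [[Lam [B [k [s [? ? ? ? ?]]]]] | [[Lam [B [k [s [? ? ? ?]]]]] ?]].
  by split=> //; exists Lam, B, k, s.
by exists Lam, B, k, s.
Qed.

Lemma zbasis_det_neq0 (Lam : set vec) B : is_lattice Lam -> zbasis Lam B -> \det B != 0.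
Proof.
case=> _ _ _ [B' [LB' B'_unit]] Lam_B.
have [Z eB'] : {Z : 'I_m -> 'I_m -> int & forall i, row i B' = \sum_r (Z i r)%:~R *: row r B}.
  apply: (@choice _ _ (fun i z => row i B' = \sum_r (z r)%:~R *: row r B)) => i.
  by have := LB' i; rewrite Lam_B => -[z _ <-]; exists z.
have B'_ZB : B' = (\matrix_(i, r) (Z i r)%:~R) *m B.
  apply/row_matrixP => i; rewrite row_mul mulmx_sum_row eB'.
  by apply: eq_bigr => r _; rewrite !mxE.
apply: contraTN B'_unit => /eqP detB0.
by rewrite B'_ZB unitmxE det_mulmx detB0 mulr0 unitr0.
Qed.

Lemma scale_lattice mu (Lam : set vec) : 0 < mu -> is_lattice Lam ->
  is_lattice [set mu *: y | y in Lam].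
Proof.
move=> mu_gt0 [Lam0 LamB discrete [B [LamB_rows B_unit]]]; split.
- by exists 0 => //; rewrite scaler0.
- by move=> _ _ [a La <-] [b Lb <-]; exists (a - b); [exact: LamB | rewrite scalerBr].
- move=> _ [b Lb <-]; have [e e_gt0 e_le] := discrete b Lb.
  exists (mu * e) => [|_ [a La <-] ab]; first exact: mulr_gt0.
  rewrite -scalerBr enormZ gtr0_norm // ler_pM2l //.
  by apply: e_le => // eab; apply: ab; rewrite eab.
- exists (mu *: B); split; last by rewrite unitmxZ // unitfE gt_eqF.
  by move=> i; rewrite [row i (_ *: _)]linearZ; exists (row i B).
Qed.

Lemma zbasis_scale mu (Lam : set vec) B :
  zbasis Lam B -> zbasis [set mu *: y | y in Lam] (mu *: B).
Proof.
move=> ->; rewrite /zbasis image_comp; apply: eq_imagel => z _ /=.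
by rewrite scaler_sumr; apply: eq_bigr => i _; rewrite [row i (_ *: _)]linearZ !scalerA mulrC.
Qed.

Lemma periodic_set_scale mu P d : 0 < mu -> periodic_set P d ->
  periodic_set [set mu *: y | y in P] (d / mu ^+ m).
Proof.
move=> mu_gt0 [Lam [B [k [s [[Lam_lat Lam_B] s_ineq -> ->]]]]].
have mu_neq0 : mu != 0 by rewrite gt_eqF.
exists [set mu *: y | y in Lam], (mu *: B), k, (fun i => mu *: s i); split.
- by split; [exact: scale_lattice | exact: zbasis_scale].
- move=> i j ij [a La /eqP]; rewrite -scalerBr (inj_eq (scalerI mu_neq0)) => /eqP ea.
  by apply: (s_ineq i j ij); rewrite -ea.
- apply/seteqP; split=> [_ [_ [i _ [a La <-]] <-]|_ [i _ [_ [a La <-] <-]]].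
    by exists i => //; exists (mu *: a); [exists a | rewrite scalerDr].
  by exists (s i + a); [exists i => //; exists a | rewrite scalerDr].
- by rewrite detZ normrM gtr0_norm ?exprn_gt0 // invfM mulrA mulrAC.
Qed.

Lemma periodic_set_density_gt0 P d : periodic_set P d -> P !=set0 -> 0 < d.
Proof.
move=> [Lam [B [k [s [[Lam_lat Lam_B] _ -> ->]]]]] [_ [i _ _]].
apply: divr_gt0; last by rewrite normr_gt0 (zbasis_det_neq0 Lam_lat).
by rewrite ltr0n; exact: leq_ltn_trans (leq0n i) (ltn_ord i).
Qed.

End PeriodicSets.

Section CodePackings.
Variables (R : realType) (m : nat).
Notation vec := 'rV[R]_m.
Variable L : set vec.
Hypothesis hL : is_lattice L.

Lemma periodic_set_cosets d n (x : 'I_n -> vec) : periodic_set L d -> inequivalent L x ->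
  periodic_set (\bigcup_(i in [set: 'I_n]) coset L (x i)) (n%:R * d).
Proof.
move=> [Lam [B [k [s [[Lam_lat Lam_B] s_ineq eL ->]]]]] x_ineq.
have Ls j : L (s j) by rewrite eL; exists j => //; exact: coset_self.
have Lam_sub : Lam `<=` L.
  move=> a La; have : L 0 by exact: lattice0.
  rewrite {1}eL => -[j _ [a0 La0 e0]].
  have L1 : L (s j + a0 + a).
    by rewrite -addrA eL; exists j => //; exists (a0 + a) => //; exact: latticeD.
  have L2 : L (s j + a0) by rewrite e0; exact: lattice0.
  by have := latticeB hL L1 L2; rewrite addrC addKr.
pose sx (q : 'I_#|{: 'I_n * 'I_k}|) := x (enum_val q).1 + s (enum_val q).2.
exists Lam, B, #|{: 'I_n * 'I_k}|, sx; split => //.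
- move=> q q' /eqP + Lsx; apply; apply: enum_val_inj; move: Lsx; rewrite /sx.
  case: (enum_val q) (enum_val q') => [i j] [i' j'] /= Lsx.
  have ii' : i = i'.
    apply/eqP/negPn/negP => ii'; apply: (x_ineq i i' ii').
    have := latticeB hL (Lam_sub _ Lsx) (latticeB hL (Ls j) (Ls j')).
    by rewrite opprD addrACA addrK.
  move: Lsx; rewrite ii' opprD addrACA subrr add0r => Ls_jj'.
  by congr pair; apply/eqP/negPn/negP => jj'; exact: s_ineq jj' Ls_jj'.
- apply/seteqP; split=> [_ [i _ [l + <-]] | _ [q _ [a La <-]]].
    rewrite {1}eL => -[j _ [a La <-]].
    by exists (enum_rank (i, j)) => //; exists a; rewrite // /sx enum_rankK addrA.
  exists (enum_val q).1 => //; exists (s (enum_val q).2 + a); last by rewrite addrA.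
  exact: latticeD (Ls _) (Lam_sub _ La).
- by rewrite card_prod !card_ord natrM mulrA.
Qed.

Lemma scaled_cosets_separated n (x : 'I_n -> vec) (delta mu : R) :
  (forall i j, i != j -> delta <= tdist (coset L (x i)) (coset L (x j))) ->
  1 <= mu -> minnorm L <= mu * delta ->
  separated (minnorm L / 2) [set mu *: y | y in \bigcup_(i in [set: 'I_n]) coset L (x i)].
Proof.
move=> x_far mu_ge1 l_le; have mu_gt0 : 0 < mu := lt_le_trans ltr01 mu_ge1.
move=> _ _ [_ [i _ [l1 Ll1 <-]] <-] [_ [j _ [l2 Ll2 <-]] <-] neq.
rewrite mulrC divfK ?pnatr_eq0 // -scalerBr enormZ gtr0_norm //.
case: (eqVneq i j) neq => [<- | ij] neq.
  rewrite opprD addrACA subrr add0r.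
  have l12 : l1 - l2 != 0.
    by apply/eqP => /eqP; rewrite subr_eq0 => /eqP l12; apply: neq; rewrite l12.
  have := minnorm_le (latticeB hL Ll1 Ll2) l12; have := enorm_ge0 (l1 - l2); nra.
apply: (le_trans l_le); rewrite ler_pM2l //; apply: (le_trans (x_far i j ij)).
by apply: tdist_le; [exists l1 | exists l2].
Qed.

End CodePackings.

Section LatticeCodes.
Variables (R : realType) (m : nat).
Notation vec := 'rV[R]_m.
Variable L : set vec.
Hypothesis hL : is_lattice L.

Lemma lattice_code_coset0 C : lattice_code L C -> C (coset L 0).
Proof. by case=> T [_ _ ->]; exists 0 => //; exists 0; [exact: lattice0 | rewrite mul0mx]. Qed.

Lemma lattice_code_size_gt0 C n : lattice_code L C -> torus_code L C n -> (0 < n)%N.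
Proof.
move=> C_lat [_ [f [_ f_C]]]; have := lattice_code_coset0 C_lat.
by rewrite -f_C => -[i _ _]; exact: leq_ltn_trans (leq0n i) (ltn_ord i).
Qed.

Lemma lattice_code_min_dist c Q C n : 0 < c -> Q *m Q^T = 1%:M ->
  L `<=` mx_image (c *: Q) L -> C = [set coset L t | t in mx_image (c *: Q) L] ->
  torus_code L C n -> (1 < n)%N -> c * minnorm L <= min_dist C.
Proof.
move=> c_gt0 QQ L_sub eC C_code n_gt1; set T := c *: Q in L_sub eC.
have C_sub X : C X -> X `<=` mx_image T L.
  rewrite eC => -[_ [y Ly <-] <-] _ [l /L_sub[z Lz <-] <-].
  by exists (y + z); [exact: latticeD | rewrite mulmxDl].
have C_coset X s : C X -> X s -> X = coset L s.
  by rewrite eC => -[t _ <-] /(coset_sub_eq hL) ->.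
apply: min_dist_ge; first exact: torus_code_two C_code n_gt1.
  by move=> X; rewrite eC => -[t _ <-]; exists t; exact: coset_self.
move=> X Y s t CX CY XY Xs Yt.
have [y Ly ey] := C_sub X CX s Xs; have [y' Ly' ey'] := C_sub Y CY t Yt.
have y_neq : y - y' != 0.
  apply/eqP => /eqP; rewrite subr_eq0 => /eqP yy'; apply: XY.
  by rewrite (C_coset X s) // (C_coset Y t) // -ey -ey' yy'.
rewrite -ey -ey' -mulmxBl enorm_orth_scale // gtr0_norm // ler_pM2l //.
exact: minnorm_le (latticeB hL Ly Ly') y_neq.
Qed.

Lemma lattice_code_index c Q C n : 0 < c -> Q *m Q^T = 1%:M ->
  C = [set coset L t | t in mx_image (c *: Q) L] -> torus_code L C n -> (0 < m)%N ->
  1 <= n%:R * c ^+ m.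
Proof.
move=> c_gt0 QQ eC C_code m_gt0; have [x _ eC'] := torus_codeP hL C_code.
apply: (lattice_image_index hL m_gt0 c_gt0 QQ (t := x)) => y Ly.
have : C (coset L (y *m (c *: Q))) by rewrite eC; exists (y *m (c *: Q)) => //; exists y.
by rewrite eC' => -[a _ ea]; exists a; rewrite ea; exact: coset_self.
Qed.

Lemma lattice_code_min_dist_bound C n : lattice_code L C -> torus_code L C n ->
  (1 < n)%N -> minnorm L ^+ m <= n%:R * min_dist C ^+ m.
Proof.
move=> [_ [[c [Q [c_gt0 QQ ->]]] L_sub eC]] C_code n_gt1.
have m_gt0 := torus_code_dim_gt0 hL C_code n_gt1.
have index := lattice_code_index c_gt0 QQ eC C_code m_gt0.
have dist := lattice_code_min_dist c_gt0 QQ L_sub eC C_code n_gt1.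
have l_ge0 := minnorm_ge0 L.
apply: (@le_trans _ _ (n%:R * (c * minnorm L) ^+ m)).
  by rewrite exprMn mulrA ler_peMl // exprn_ge0.
by rewrite ler_wpM2l // lerXn2r // nnegrE ?min_dist_ge0 // mulr_ge0 // ltW.
Qed.

Lemma affine_image_lattice_code n (x : 'I_n -> vec) T b :
  (0 < n)%N -> is_CO T -> inequivalent L x ->
  \bigcup_(i in [set: 'I_n]) coset L (x i) = [set y *m T + b | y in L] ->
  exists2 C', lattice_code L C' /\ torus_code L C' n &
    [set coset L (x i) | i in [set: 'I_n]] = transl b @` C'.
Proof.
move=> n_gt0 T_CO x_ineq eU.
have onto i l : L l -> exists2 y, L y & y *m T + b = x i + l.
  move=> Ll; have : [set y *m T + b | y in L] (x i + l) by rewrite -eU; exists i => //; exists l.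
  by case=> y Ly e; exists y.
have into y : L y -> exists i, coset L (x i) (y *m T + b).
  move=> Ly; have : (\bigcup_(i in [set: 'I_n]) coset L (x i)) (y *m T + b) by rewrite eU; exists y.
  by case=> i _ h; exists i.
exists [set coset L (x i - b) | i in [set: 'I_n]]; last first.
  by rewrite transl_cosets; apply: eq_imagel => i _; rewrite subrK.
split; last by apply: (torus_code_cosets hL) => i j ij; rewrite opprB addrA subrK; exact: x_ineq.
exists T; split => //.
- move=> l Ll; pose i0 := Ordinal n_gt0.
  have [y1 Ly1 e1] := onto i0 l Ll; have [y0 Ly0 e0] := onto i0 0 (lattice0 hL).
  exists (y1 - y0); first exact: latticeB.
  have -> : (y1 - y0) *m T = (y1 *m T + b) - (y0 *m T + b).
    by rewrite mulmxBl opprD addrACA subrr addr0.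
  by rewrite e1 e0 addr0 addrC addKr.
- apply/seteqP; split=> [_ [i _ <-] | _ [_ [y Ly <-] <-]].
    have [y Ly e] := onto i 0 (lattice0 hL).
    by exists (y *m T); [exists y | rewrite -(addrK b (y *m T)) e addr0].
  have [i h] := into y Ly; exists i => //.
  by rewrite -[y *m T](addrK b) -[in RHS]transl_coset (coset_sub_eq hL h) transl_coset.
Qed.

End LatticeCodes.

Section Densest.
Variables (R : realType) (m : nat).
Notation vec := 'rV[R]_m.
Variables (L : set vec) (dL : R).
Hypotheses (hL : is_lattice L) (hLd : periodic_packing (minnorm L / 2) L dL)
  (hmax : forall (P : set vec) d, periodic_packing (minnorm L / 2) P d -> d <= dL).

Lemma scaled_code_packing n (x : 'I_n -> vec) delta mu : inequivalent L x ->
  (forall i j, i != j -> delta <= tdist (coset L (x i)) (coset L (x j))) ->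
  1 <= mu -> minnorm L <= mu * delta ->
  periodic_packing (minnorm L / 2)
    [set mu *: y | y in \bigcup_(i in [set: 'I_n]) coset L (x i)] (n%:R * dL / mu ^+ m).
Proof.
move=> x_ineq x_far mu_ge1 l_le; apply/periodic_packingP; split.
  apply: periodic_set_scale; first exact: lt_le_trans ltr01 mu_ge1.
  by apply: (periodic_set_cosets hL) => //; case/periodic_packingP: hLd.
exact: (scaled_cosets_separated hL x_far mu_ge1 l_le).
Qed.

Lemma code_min_dist_bound C n : torus_code L C n -> (1 < n)%N ->
  n%:R * min_dist C ^+ m <= minnorm L ^+ m.
Proof.
move=> C_code n_gt1; have m_gt0 := torus_code_dim_gt0 hL C_code n_gt1.
have [x x_ineq eC] := torus_codeP hL C_code.
have x_far i j : i != j -> min_dist C <= tdist (coset L (x i)) (coset L (x j)).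
  by rewrite eC; exact: min_dist_cosets_le.
have dL_gt0 : 0 < dL.
  case/periodic_packingP: hLd => /periodic_set_density_gt0 + _; apply.
  by exists 0; exact: lattice0.
have size_le mu : 1 <= mu -> minnorm L <= mu * min_dist C -> n%:R <= mu ^+ m.
  move=> mu_ge1 l_le; have := hmax (scaled_code_packing x_ineq x_far mu_ge1 l_le).
  by rewrite ler_pdivrMr ?exprn_gt0 ?(lt_le_trans ltr01) // mulrC ler_pM2l.
set delta := min_dist C in x_far size_le *; set l := minnorm L in size_le *.
have [delta0 | delta_neq0] := eqVneq delta 0.
  by rewrite delta0 expr0n gtn_eqF // mulr0 exprn_ge0 // minnorm_ge0.
have delta_gt0 : 0 < delta by rewrite lt_def delta_neq0 min_dist_ge0.
have [l_le | delta_lt] := lerP l delta.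
  by move: (size_le 1 (lexx 1)); rewrite mul1r expr1n lern1 leqNgt n_gt1 => /(_ l_le).
have mu_ge1 : 1 <= l / delta by rewrite ler_pdivlMr // mul1r ltW.
move: (size_le _ mu_ge1); rewrite divfK ?gt_eqF // => /(_ (lexx l)).
by rewrite expr_div_n ler_pdivlMr // exprn_gt0.
Qed.

Lemma lattice_code_optimal C n : lattice_code L C -> torus_code L C n -> optimal_code L C n.
Proof.
move=> C_lat C_code; split=> // C' C'_code.
have [n_le1 | n_gt1] := leqP n 1.
  by rewrite (min_dist_small C'_code n_le1) min_dist_ge0.
have m_gt0 := torus_code_dim_gt0 hL C_code n_gt1.
have n_gt0 : 0 < n%:R :> R by rewrite ltr0n ltnW.
rewrite -(ler_pXn2r m_gt0) ?nnegrE ?min_dist_ge0 // -(ler_pM2l n_gt0).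
apply: le_trans (code_min_dist_bound C'_code n_gt1) _.
exact: (lattice_code_min_dist_bound hL C_lat C_code n_gt1).
Qed.

Lemma optimal_code_min_dist C0 C n : lattice_code L C0 -> torus_code L C0 n ->
  optimal_code L C n -> (1 < n)%N -> n%:R * min_dist C ^+ m = minnorm L ^+ m.
Proof.
move=> C0_lat C0_code [C_code C_opt] n_gt1.
apply/eqP; rewrite eq_le code_min_dist_bound //=.
apply: le_trans (lattice_code_min_dist_bound hL C0_lat C0_code n_gt1) _.
by rewrite ler_wpM2l // lerXn2r ?nnegrE ?min_dist_ge0 //; exact: C_opt.
Qed.

Hypothesis huniq : forall P : set vec, periodic_packing (minnorm L / 2) P dL ->
  exists2 f : vec -> vec, Defs.isometry f & P = f @` L.

Lemma optimal_code_lattice C0 C n : lattice_code L C0 -> torus_code L C0 n ->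
  optimal_code L C n -> (1 < n)%N ->
  exists C' phi, [/\ lattice_code L C', torus_code L C' n, torus_isometry L phi & C = phi @` C'].
Proof.
move=> C0_lat C0_code C_opt n_gt1; have [C_code _] := C_opt.
have m_gt0 := torus_code_dim_gt0 hL C_code n_gt1.
have extremal := optimal_code_min_dist C0_lat C0_code C_opt n_gt1.
have [x x_ineq eC] := torus_codeP hL C_code.
set delta := min_dist C in extremal; set l := minnorm L in extremal.
have l_gt0 : 0 < l := minnorm_gt0 hL m_gt0.
have delta_gt0 : 0 < delta.
  rewrite lt_def min_dist_ge0 andbT; apply: contra_eq_neq extremal => ->.
  by rewrite expr0n gtn_eqF // mulr0 eq_sym expf_neq0 // gt_eqF.
set mu := l / delta.
have mu_n : mu ^+ m = n%:R by rewrite expr_div_n -extremal mulfK // expf_neq0 // gt_eqF.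
have mu_gt0 : 0 < mu by rewrite divr_gt0.
have mu_ge1 : 1 <= mu by rewrite -(expr_ge1 m_gt0 (ltW mu_gt0)) mu_n ler1n ltnW.
have x_far i j : i != j -> delta <= tdist (coset L (x i)) (coset L (x j)).
  by rewrite /delta eC; exact: min_dist_cosets_le.
have l_le : l <= mu * delta by rewrite divfK ?gt_eqF.
have := scaled_code_packing x_ineq x_far mu_ge1 l_le.
have n_neq0 : n%:R != 0 :> R by rewrite pnatr_eq0 gtn_eqF // ltnW.
rewrite mu_n mulrAC divff // mul1r => /huniq[f f_iso eP].
have [Q [b [QQ ef]]] := isometry_affine f_iso.
have mu_neq0 : mu != 0 by rewrite gt_eqF.
have eU := scaled_image_affine mu_neq0 (etrans eP (eq_imagel (fun y _ => ef y))).
have T_CO : is_CO (mu^-1 *: Q) by exists mu^-1, Q; rewrite invr_gt0.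
have [C' [C'_lat C'_code] eCC'] := affine_image_lattice_code hL (ltnW n_gt1) T_CO x_ineq eU.
by exists C', (transl (mu^-1 *: b)); split => //; [exact: transl_isometry | rewrite eC].
Qed.

End Densest.

Lemma torus_code1_lattice (R : realType) (m : nat) (L : set 'rV[R]_m) C0 C :
  is_lattice L -> lattice_code L C0 -> torus_code L C0 1 -> torus_code L C 1 ->
  exists C' phi, [/\ lattice_code L C', torus_code L C' 1, torus_isometry L phi & C = phi @` C'].
Proof.
move=> hL C0_lat C0_code C_code; have [x _ eC] := torus_codeP hL C_code.
exists C0, (transl (x ord0)); split => //; first exact: transl_isometry.
rewrite (torus_code1 C0_code (lattice_code_coset0 hL C0_lat)) image_set1 transl_coset add0r.
by apply: (torus_code1 C_code); rewrite eC; exists ord0.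
Qed.

Unset Implicit Arguments.

Theorem lemma4p6 (R : realType) (m : nat) (L : set 'rV[R]_m) :
  is_lattice L -> unique_densest L ->
  (forall C : set (set 'rV[R]_m), lattice_code L C ->
     forall n : nat, torus_code L C n -> optimal_code L C n) /\
  (forall n : nat, (exists C, lattice_code L C /\ torus_code L C n) ->
     forall C, optimal_code L C n ->
       exists C' phi, [/\ lattice_code L C', torus_code L C' n,
                          torus_isometry L phi & C = phi @` C']).
Proof.
move=> hL [dL [hLd hmax huniq]].
split=> [C C_lat n C_code | n [C0 [C0_lat C0_code]] C C_opt].
  exact: (lattice_code_optimal hL hLd hmax C_lat C_code).
have [n_le1 | n_gt1] := leqP n 1; last first.
  exact: (optimal_code_lattice hL hLd hmax huniq C0_lat C0_code C_opt n_gt1).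
have n1 : n = 1%N by apply/anti_leq; rewrite n_le1 (lattice_code_size_gt0 hL C0_lat C0_code).
by subst n; exact: (torus_code1_lattice hL C0_lat C0_code C_opt.1).
Qed.
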